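(* Fix an integer $n\ge 1$. For every formula $\varphi$ of NM logic in the variables $x_1,\dots,x_n$, $\chi^+([\varphi]_\equiv)$ equals the number of assignments $\mu$ of $x_1,\dots,x_n$ to values in $\{0,\tfrac12,1\}$ such that $\varphi$ evaluates to $1$ in the three-element NM chain $\{0,\tfrac12,1\}$ under $\mu$; i.e. the number of tuples $(a_1,\dots,a_n)\in\{0,\tfrac12,1\}^n$ with $\varphi(a_1,\dots,a_n)=1$.
   Context: An NM algebra is an algebra $\langle A,\wedge,\vee,\odot,\to,\bot,\top\rangle$ such that $(A,\wedge,\vee,\bot,\top)$ is a bounded lattice, $\langle A,\odot,\top\rangle$ is a commutative monoid, and for all $x,y,z$: $x\odot y\le z$ iff $x\le y\to z$; $(x\to y)\vee(y\to x)=\top$; $\neg(x\odot y)\vee((x\wedge y)\to(x\odot y))=\top$ where $\neg x:=x\to\bot$; and $\neg\neg x=x$. The standard NM algebra is $[0,1]$ with $\wedge=\min$, $\vee=\max$, $x\odot y=\min(x,y)$ if $x+y>1$ and $0$ otherwise, $x\to y=1$ if $x\le y$ and $\max(1-x,y)$ otherwise; $\{0,\tfrac12,1\}$ is a subalgebra. $\mathcal{NM}_n$ is the free NM algebra on $n$ generators, i.e. the Lindenbaum algebra of formulas in $x_1,\dots,x_n$ modulo logical equivalence $\equiv$; $[\varphi]_\equiv$ is the class of $\varphi$. It is a finite distributive lattice. A valuation on a distributive lattice $L$ is a map $\nu:L\to\mathbb{R}$ with $\nu(x)+\nu(y)=\nu(x\vee y)+\nu(x\wedge y)$; on a finite distributive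 lattice a valuation is uniquely determined by its values on join-irreducible elements and on $\bot$. An element is join-irreducible if it is not $\bot$ and $x=y\vee z$ implies $x=y$ or $x=z$. The idempotent Euler characteristic $\chi^+:\mathcal{NM}_n\to\mathbb{R}$ is the unique valuation with $\chi^+(\bot)=0$ and, for each join-irreducible $g$, $\chi^+(g)=1$ if $g\odot g=g$ and $\chi^+(g)=0$ otherwise. *)

From mathcomp Require Import all_boot.
From Stdlib Require Import Reals.
Local Open Scope R_scope.

Set Implicit Arguments.
Unset Strict Implicit.
Unset Printing Implicit Defensive.

Record NMAlg := {
  carrier :> Type;
  nm_meet : carrier -> carrier -> carrier;
  nm_join : carrier -> carrier -> carrier;
  nm_conj : carrier -> carrier -> carrier;
  nm_imp  : carrier -> carrier -> carrier;
  nm_bot  : carrier;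
  nm_top  : carrier;
  nm_meetA : forall x y z, nm_meet x (nm_meet y z) = nm_meet (nm_meet x y) z;
  nm_joinA : forall x y z, nm_join x (nm_join y z) = nm_join (nm_join x y) z;
  nm_meetC : forall x y, nm_meet x y = nm_meet y x;
  nm_joinC : forall x y, nm_join x y = nm_join y x;
  nm_meetK : forall x y, nm_meet x (nm_join x y) = x;
  nm_joinK : forall x y, nm_join x (nm_meet x y) = x;
  nm_bot_le : forall x, nm_meet nm_bot x = nm_bot;
  nm_le_top : forall x, nm_meet x nm_top = x;
  nm_conjA : forall x y z, nm_conj x (nm_conj y z) = nm_conj (nm_conj x y) z;
  nm_conjC : forall x y, nm_conj x y = nm_conj y x;
  nm_conj1 : forall x, nm_conj x nm_top = x;
  (* residuation: x (.) y <= z iff x <= y -> z, with a <= b iff a /\ b = a *)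
  nm_resid : forall x y z,
      nm_meet (nm_conj x y) z = nm_conj x y <-> nm_meet x (nm_imp y z) = x;
  nm_prelin : forall x y, nm_join (nm_imp x y) (nm_imp y x) = nm_top;
  nm_axiom : forall x y,
      nm_join (nm_imp (nm_conj x y) nm_bot)
              (nm_imp (nm_meet x y) (nm_conj x y)) = nm_top;
  nm_invol : forall x, nm_imp (nm_imp x nm_bot) nm_bot = x
}.

Inductive form (n : nat) : Type :=
| FVar  : 'I_n -> form n
| FBot  : form n
| FTop  : form n
| FAnd  : form n -> form n -> form n
| FOr   : form n -> form n -> form n
| FConj : form n -> form n -> form n
| FImp  : form n -> form n -> form n.

Arguments FBot {n}.
Arguments FTop {n}.

Fixpoint eval (n : nat) (A : NMAlg) (v : 'I_n -> A) (f : form n) : A :=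
  match f with
  | FVar i => v i
  | FBot => @nm_bot A
  | FTop => @nm_top A
  | FAnd a b => @nm_meet A (@eval n A v a) (@eval n A v b)
  | FOr a b => @nm_join A (@eval n A v a) (@eval n A v b)
  | FConj a b => @nm_conj A (@eval n A v a) (@eval n A v b)
  | FImp a b => @nm_imp A (@eval n A v a) (@eval n A v b)
  end.
Arguments eval {n} A v f.

(* Logical equivalence = equality in the Lindenbaum / free NM algebra NM_n:
   the identity phi = psi holds in every NM algebra. *)
Definition fequiv (n : nat) (f g : form n) : Prop :=
  forall (A : NMAlg) (v : 'I_n -> A), eval A v f = eval A v g.

Definition join_irreducible (n : nat) (g : form n) : Prop :=
  ~ fequiv g FBot /\
  forall a b : form n, fequiv g (FOr a b) -> fequiv g a \/ fequiv g b.

Definition idempotent (n : nat) (g : form n) : Prop := fequiv (FConj g g) g.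

(* A valuation on NM_n, presented as a map on formulas constant on classes. *)
Definition valuation (n : nat) (nu : form n -> R) : Prop :=
  (forall a b, fequiv a b -> nu a = nu b) /\
  (forall a b, (nu a + nu b = nu (FOr a b) + nu (FAnd a b))%R).

Definition is_chi_plus (n : nat) (nu : form n -> R) : Prop :=
  valuation nu /\ nu FBot = 0%R /\
  forall g : form n, join_irreducible g ->
    (idempotent g -> nu g = 1%R) /\ (~ idempotent g -> nu g = 0%R).

Definition std_conj (x y : R) : R :=
  if Rlt_dec 1 (x + y) then Rmin x y else 0.
Definition std_imp (x y : R) : R :=
  if Rle_dec x y then 1 else Rmax (1 - x) y.

Fixpoint evalR (n : nat) (v : 'I_n -> R) (f : form n) : R :=
  match f with
  | FVar i => v i
  | FBot => 0
  | FTop => 1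
  | FAnd a b => Rmin (evalR v a) (evalR v b)
  | FOr a b => Rmax (evalR v a) (evalR v b)
  | FConj a b => std_conj (evalR v a) (evalR v b)
  | FImp a b => std_imp (evalR v a) (evalR v b)
  end.

Definition is_one (x : R) : bool := if Req_EM_T x 1 then true else false.

Definition three_val (k : 'I_3) : R := (INR (nat_of_ord k) / 2)%R.

Definition count_models3 (n : nat) (f : form n) : nat :=
  (#|[set mu : {ffun 'I_n -> 'I_3} | is_one (evalR (fun i => three_val (mu i)) f)]|)%N.

(** χ⁺ is unique because a valuation on a finite distributive lattice is fixed by its
    values on join-irreducibles and on ⊥; here finiteness is replaced by a well-founded
    measure. Counting models in the chain {0, 1/2, 1} is a valuation (inclusion–exclusion)
    that respects equivalence, since the chain is a subalgebra of [0,1]. A join-irreducible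
    [g] has at most one model: two different assignments are separated by some [h ⊔ k = ⊤]
    (prelinearity or the NM axiom applied to a variable), and [g = (g ⊙ h) ⊔ (g ⊙ k)].
    It has a model iff it is idempotent: [g = g² ⊔ (g ⊓ ¬g)] excludes models of
    non-idempotent [g], and an idempotent [g ≠ ⊥] exceeds 1/2 somewhere in [0,1], which
    rounds to a model.

    Everything rests on completeness of NM for the points of [0,1] on a fixed finite grid
    {0, 1/D, …, 1}: if [f ⇒ g] fails, a filter avoiding it makes the literals (variables,
    negated variables, constants) a chain in which every formula equals a literal, and
    this chain with its involution embeds into the grid. *)

From Pilot Require Import Defs.
From mathcomp Require Import all_boot.
From Stdlib Require Import Reals Lra ClassicalEpsilon ProofIrrelevance.
From mathcomp Require Import zify.

Set Implicit Arguments.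
Unset Strict Implicit.
Unset Printing Implicit Defensive.
Set Bullet Behavior "Strict Subproofs".

Definition nm_neg (A : NMAlg) (x : A) : A := nm_imp x (nm_bot A).
Definition nm_le (A : NMAlg) (x y : A) : Prop := nm_meet x y = x.

Notation "x ⊓ y" := (nm_meet x y) (at level 40, left associativity).
Notation "x ⊔ y" := (nm_join x y) (at level 50, left associativity).
Notation "x ⊙ y" := (nm_conj x y) (at level 40, left associativity).
Notation "x ⇒ y" := (nm_imp x y) (at level 55, right associativity).
Notation "¬ x" := (nm_neg x) (at level 35, right associativity).
Notation "x ≼ y" := (nm_le x y) (at level 70, no associativity).

Section NMAlgebraTheory.
Variable A : NMAlg.
Implicit Types x y z : A.
Local Notation "⊥" := (nm_bot A).
Local Notation "⊤" := (nm_top A).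

Lemma nm_meetxx x : x ⊓ x = x.
Proof. by rewrite -{2}(nm_joinK x x) nm_meetK. Qed.

Lemma nm_le_refl x : x ≼ x. Proof. exact: nm_meetxx. Qed.

Lemma nm_le_joinE x y : x ≼ y <-> x ⊔ y = y.
Proof.
split=> h; first by rewrite -h nm_joinC nm_meetC nm_joinK.
by rewrite /nm_le -h nm_meetK.
Qed.

Lemma nm_le_trans x y z : x ≼ y -> y ≼ z -> x ≼ z.
Proof. rewrite /nm_le => h1 h2. by rewrite -h1 -nm_meetA h2. Qed.

Lemma nm_le_anti x y : x ≼ y -> y ≼ x -> x = y.
Proof. rewrite /nm_le => h1 h2. by rewrite -h1 nm_meetC h2. Qed.

Lemma nm_le_ext x y : (forall z, z ≼ x <-> z ≼ y) -> x = y.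
Proof. move=> h. apply: nm_le_anti; [apply/h|apply/h]; exact: nm_le_refl. Qed.

Lemma nm_le_meet x y z : z ≼ x -> z ≼ y -> z ≼ x ⊓ y.
Proof. rewrite /nm_le => h1 h2. by rewrite nm_meetA h1 h2. Qed.

Lemma nm_meet_le_l x y : x ⊓ y ≼ x.
Proof. by rewrite /nm_le nm_meetC nm_meetA nm_meetxx. Qed.

Lemma nm_meet_le_r x y : x ⊓ y ≼ y.
Proof. rewrite nm_meetC; exact: nm_meet_le_l. Qed.

Lemma nm_le_join_l x y : x ≼ x ⊔ y. Proof. exact: nm_meetK. Qed.

Lemma nm_le_join_r x y : y ≼ x ⊔ y.
Proof. rewrite nm_joinC; exact: nm_le_join_l. Qed.

Lemma nm_join_le x y z : x ≼ z -> y ≼ z -> x ⊔ y ≼ z.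
Proof. rewrite !nm_le_joinE => h1 h2. by rewrite -nm_joinA h2 h1. Qed.

Lemma nm_le0x x : ⊥ ≼ x. Proof. exact: nm_bot_le. Qed.
Lemma nm_lex1 x : x ≼ ⊤. Proof. exact: nm_le_top. Qed.

Lemma nm_le1x x : ⊤ ≼ x -> x = ⊤.
Proof. by move=> h; apply: nm_le_anti (nm_lex1 x) h. Qed.

Lemma nm_lex0 x : x ≼ ⊥ -> x = ⊥.
Proof. by move=> h; apply: nm_le_anti h (nm_le0x x). Qed.

Lemma nm_le_resid x y z : x ⊙ y ≼ z <-> x ≼ y ⇒ z. Proof. exact: nm_resid. Qed.

Lemma nm_conj1l x : ⊤ ⊙ x = x. Proof. by rewrite nm_conjC nm_conj1. Qed.

Lemma nm_conj_monol x y z : x ≼ y -> x ⊙ z ≼ y ⊙ z.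
Proof.
move=> h. apply/nm_le_resid. apply: nm_le_trans h _. apply/nm_le_resid. exact: nm_le_refl.
Qed.

Lemma nm_conj_monor x y z : x ≼ y -> z ⊙ x ≼ z ⊙ y.
Proof. move=> h. rewrite ![z ⊙ _]nm_conjC. exact: nm_conj_monol. Qed.

Lemma nm_conj_mono x y x' y' : x ≼ x' -> y ≼ y' -> x ⊙ y ≼ x' ⊙ y'.
Proof. move=> h1 h2. apply: nm_le_trans (nm_conj_monol _ h1) _. exact: nm_conj_monor. Qed.

Lemma nm_conj_le_l x y : x ⊙ y ≼ x.
Proof. have := nm_conj_monor x (nm_lex1 y). by rewrite nm_conj1. Qed.

Lemma nm_conj_le_r x y : x ⊙ y ≼ y.
Proof. rewrite nm_conjC; exact: nm_conj_le_l. Qed.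

Lemma nm_conj_imp_le x y : x ⊙ (x ⇒ y) ≼ y.
Proof. rewrite nm_conjC. apply/nm_le_resid. exact: nm_le_refl. Qed.

Lemma nm_imp_conj_le x y : (x ⇒ y) ⊙ x ≼ y.
Proof. rewrite nm_conjC; exact: nm_conj_imp_le. Qed.

Lemma nm_le_imp_top x y : x ≼ y <-> x ⇒ y = ⊤.
Proof.
split=> h.
- apply: nm_le1x. apply/nm_le_resid. by rewrite nm_conj1l.
- have : ⊤ ≼ x ⇒ y by rewrite h; exact: nm_le_refl.
  by move/nm_le_resid; rewrite nm_conj1l.
Qed.

Lemma nm_conj0 x : x ⊙ ⊥ = ⊥.
Proof. apply: nm_lex0. exact: nm_conj_le_r. Qed.

Lemma nm_conjACA x y z t : (x ⊙ y) ⊙ (z ⊙ t) = (x ⊙ z) ⊙ (y ⊙ t).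
Proof. by rewrite -!nm_conjA (nm_conjA y z t) (nm_conjC y z) -nm_conjA. Qed.

Lemma nm_conj_joinr x y z : x ⊙ (y ⊔ z) = x ⊙ y ⊔ x ⊙ z.
Proof.
apply: nm_le_anti.
- rewrite nm_conjC. apply/nm_le_resid. apply: nm_join_le; apply/nm_le_resid; rewrite nm_conjC.
  + exact: nm_le_join_l.
  + exact: nm_le_join_r.
- apply: nm_join_le; apply: nm_conj_monor; [exact: nm_le_join_l|exact: nm_le_join_r].
Qed.

Lemma nm_conj_split_top x y z : y ⊔ z = ⊤ -> x = x ⊙ y ⊔ x ⊙ z.
Proof. move=> e. by rewrite -nm_conj_joinr e nm_conj1. Qed.

Lemma nm_imp_antil x y z : x ≼ y -> y ⇒ z ≼ x ⇒ z.
Proof.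
move=> h. apply/nm_le_resid. apply: nm_le_trans (nm_imp_conj_le y z). exact: nm_conj_monor.
Qed.

Lemma nm_le_neg x y : x ≼ ¬ y <-> x ⊙ y ≼ ⊥.
Proof. by rewrite nm_le_resid. Qed.

Lemma nm_negK x : ¬ ¬ x = x. Proof. exact: nm_invol. Qed.

Lemma nm_neg_anti x y : x ≼ y -> ¬ y ≼ ¬ x.
Proof. exact: nm_imp_antil. Qed.

Lemma nm_neg_le x y : ¬ y ≼ ¬ x -> x ≼ y.
Proof. move/nm_neg_anti. by rewrite !nm_negK. Qed.

Lemma nm_neg_top : ¬ ⊤ = ⊥.
Proof. apply: nm_lex0. have := nm_conj_imp_le ⊤ ⊥. by rewrite nm_conj1l. Qed.

Lemma nm_neg_bot : ¬ ⊥ = ⊤.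
Proof. apply: nm_le1x. apply/nm_le_resid. rewrite nm_conj0. exact: nm_le_refl. Qed.

Lemma nm_neg_meet x y : ¬ (x ⊓ y) = ¬ x ⊔ ¬ y.
Proof.
apply: nm_le_anti; last first.
  apply: nm_join_le; apply: nm_neg_anti; [exact: nm_meet_le_l|exact: nm_meet_le_r].
apply: nm_neg_le. rewrite nm_negK. apply: nm_le_meet.
- apply: nm_le_trans (nm_neg_anti (nm_le_join_l (¬ x) (¬ y))) _.
  rewrite nm_negK; exact: nm_le_refl.
- apply: nm_le_trans (nm_neg_anti (nm_le_join_r (¬ x) (¬ y))) _.
  rewrite nm_negK; exact: nm_le_refl.
Qed.

Lemma nm_neg_conj x y : ¬ (x ⊙ y) = x ⇒ ¬ y.
Proof. apply: nm_le_ext => z. by rewrite nm_le_neg -nm_le_resid nm_le_neg nm_conjA. Qed.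

Lemma nm_imp_contra x y : x ⇒ y = ¬ y ⇒ ¬ x.
Proof.
apply: nm_le_ext => z.
by rewrite -!nm_le_resid -nm_conjA (nm_conjC (¬ y)) nm_conjA -nm_le_neg nm_negK.
Qed.

Lemma nm_conj_neg x : x ⊙ ¬ x = ⊥.
Proof. apply: nm_lex0. exact: nm_conj_imp_le. Qed.

Lemma nm_sq_le x : x ⊙ x ≼ x. Proof. exact: nm_conj_le_l. Qed.

Lemma nm_sq_cube x : x ⊙ x = x ⊙ x ⊙ x.
Proof.
apply: nm_le_anti; last exact: nm_conj_le_l.
have ax := nm_axiom x x; rewrite nm_meetxx in ax.
rewrite {1}(nm_conj_split_top (x ⊙ x) ax).
apply: nm_join_le.
- rewrite nm_conj_neg. exact: nm_le0x.
- rewrite -!nm_conjA. apply: nm_conj_monor. exact: nm_conj_imp_le.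
Qed.

Lemma nm_sq_idem x : (x ⊙ x) ⊙ (x ⊙ x) = x ⊙ x.
Proof. by rewrite nm_conjA -!nm_sq_cube. Qed.

Lemma nm_conj_le_sq x y : x ⊙ y ≼ x ⊙ x ⊔ y ⊙ y.
Proof.
rewrite (nm_conj_split_top (x ⊙ y) (nm_prelin x y)).
apply: nm_join_le.
- apply: nm_le_trans _ (nm_le_join_r _ _).
  rewrite (nm_conjC x y) -nm_conjA. apply: nm_conj_monor. exact: nm_conj_imp_le.
- apply: nm_le_trans _ (nm_le_join_l _ _).
  rewrite -nm_conjA. apply: nm_conj_monor. exact: nm_conj_imp_le.
Qed.

Lemma nm_sq_join x y : (x ⊔ y) ⊙ (x ⊔ y) ≼ x ⊙ x ⊔ y ⊙ y.
Proof.
rewrite nm_conj_joinr (nm_conjC _ x) (nm_conjC _ y) !nm_conj_joinr.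
apply: nm_join_le; apply: nm_join_le.
- exact: nm_le_join_l.
- exact: nm_conj_le_sq.
- by rewrite nm_conjC; exact: nm_conj_le_sq.
- exact: nm_le_join_r.
Qed.

Lemma nm_split_sq x : x = x ⊙ x ⊔ x ⊓ ¬ x.
Proof.
apply: nm_le_anti; last by apply: nm_join_le; [exact: nm_sq_le|exact: nm_meet_le_l].
have ax := nm_axiom x x; rewrite nm_meetxx in ax.
rewrite {1}(nm_conj_split_top x ax) nm_joinC. apply: nm_join_le.
- apply: nm_le_trans _ (nm_le_join_l _ _). exact: nm_conj_imp_le.
- apply: nm_le_trans _ (nm_le_join_r _ _). apply: nm_le_meet; first exact: nm_conj_le_l.
  apply/nm_le_neg. rewrite nm_conjC nm_conjA. exact: nm_conj_imp_le.
Qed.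

End NMAlgebraTheory.

(** [x ≼[e] y] is the order modulo the filter generated by the idempotent [e]. *)
Definition nm_le_mod (A : NMAlg) (e x y : A) : Prop := e ⊙ x ≼ y.
Definition nm_eq_mod (A : NMAlg) (e x y : A) : Prop := nm_le_mod e x y /\ nm_le_mod e y x.

Notation "x ≼[ e ] y" := (nm_le_mod e x y) (at level 70, no associativity).
Notation "x ≡[ e ] y" := (nm_eq_mod e x y) (at level 70, no associativity).

Section FilterCongruence.
Variables (A : NMAlg) (e : A).
Hypothesis e_idem : e ⊙ e = e.
Implicit Types x y z : A.
Local Notation "⊥" := (nm_bot A).
Local Notation "⊤" := (nm_top A).

Lemma le_modE x y : x ≼[e] y <-> e ≼ x ⇒ y. Proof. exact: nm_le_resid. Qed.

Lemma le_mod_refl x : x ≼[e] x. Proof. exact: nm_conj_le_r. Qed.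

Lemma le_mod_trans x y z : x ≼[e] y -> y ≼[e] z -> x ≼[e] z.
Proof.
rewrite /nm_le_mod => h1 h2. rewrite -e_idem -nm_conjA.
apply: nm_le_trans h2. exact: nm_conj_monor.
Qed.

Lemma le_le_mod x y : x ≼ y -> x ≼[e] y.
Proof. move=> h. apply: nm_le_trans h. exact: nm_conj_le_r. Qed.

Lemma eq_mod_refl x : x ≡[e] x. Proof. split; exact: le_mod_refl. Qed.

Lemma eq_mod_trans x y z : x ≡[e] y -> y ≡[e] z -> x ≡[e] z.
Proof. move=> [h1 h2] [h3 h4]; split; apply: le_mod_trans; eassumption. Qed.

Lemma le_mod_meet x x' y y' : x ≼[e] x' -> y ≼[e] y' -> x ⊓ y ≼[e] x' ⊓ y'.
Proof.
rewrite /nm_le_mod => h1 h2. apply: nm_le_meet.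
- apply: nm_le_trans h1. apply: nm_conj_monor. exact: nm_meet_le_l.
- apply: nm_le_trans h2. apply: nm_conj_monor. exact: nm_meet_le_r.
Qed.

Lemma le_mod_join x x' y y' : x ≼[e] x' -> y ≼[e] y' -> x ⊔ y ≼[e] x' ⊔ y'.
Proof.
rewrite /nm_le_mod => h1 h2. rewrite nm_conj_joinr. apply: nm_join_le.
- apply: nm_le_trans h1 _. exact: nm_le_join_l.
- apply: nm_le_trans h2 _. exact: nm_le_join_r.
Qed.

Lemma le_mod_conj x x' y y' : x ≼[e] x' -> y ≼[e] y' -> x ⊙ y ≼[e] x' ⊙ y'.
Proof. rewrite /nm_le_mod => h1 h2. rewrite -e_idem nm_conjACA. exact: nm_conj_mono. Qed.

Lemma le_mod_imp x x' y y' : x' ≼[e] x -> y ≼[e] y' -> x ⇒ y ≼[e] x' ⇒ y'.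
Proof.
rewrite /nm_le_mod => h1 h2. apply/(nm_le_resid (e ⊙ (x ⇒ y)) x' y').
have -> : e ⊙ (x ⇒ y) ⊙ x' = e ⊙ ((x ⇒ y) ⊙ (e ⊙ x')).
  rewrite -{1}e_idem -!nm_conjA. congr (e ⊙ _). by rewrite !nm_conjA (nm_conjC e).
apply: nm_le_trans h2. apply: nm_conj_monor.
apply: nm_le_trans (nm_imp_conj_le x y). exact: nm_conj_monor.
Qed.

Lemma eq_mod_meet x x' y y' : x ≡[e] x' -> y ≡[e] y' -> x ⊓ y ≡[e] x' ⊓ y'.
Proof. move=> [? ?] [? ?]; split; exact: le_mod_meet. Qed.

Lemma eq_mod_join x x' y y' : x ≡[e] x' -> y ≡[e] y' -> x ⊔ y ≡[e] x' ⊔ y'.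
Proof. move=> [? ?] [? ?]; split; exact: le_mod_join. Qed.

Lemma eq_mod_conj x x' y y' : x ≡[e] x' -> y ≡[e] y' -> x ⊙ y ≡[e] x' ⊙ y'.
Proof. move=> [? ?] [? ?]; split; exact: le_mod_conj. Qed.

Lemma eq_mod_imp x x' y y' : x ≡[e] x' -> y ≡[e] y' -> x ⇒ y ≡[e] x' ⇒ y'.
Proof. move=> [? ?] [? ?]; split; exact: le_mod_imp. Qed.

Lemma eq_mod_meet_l x y : x ≼[e] y -> x ⊓ y ≡[e] x.
Proof.
move=> h; split; first exact: le_le_mod (nm_meet_le_l _ _).
apply: nm_le_meet => //. exact: nm_conj_le_r.
Qed.

Lemma eq_mod_meet_r x y : y ≼[e] x -> x ⊓ y ≡[e] y.
Proof. rewrite nm_meetC. exact: eq_mod_meet_l. Qed.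

Lemma eq_mod_join_r x y : x ≼[e] y -> x ⊔ y ≡[e] y.
Proof.
move=> h; split; last exact: le_le_mod (nm_le_join_r _ _).
rewrite /nm_le_mod nm_conj_joinr. apply: nm_join_le => //. exact: nm_conj_le_r.
Qed.

Lemma eq_mod_join_l x y : y ≼[e] x -> x ⊔ y ≡[e] x.
Proof. rewrite nm_joinC. exact: eq_mod_join_r. Qed.

Lemma eq_mod_conj_bot x y : x ≼[e] ¬ y -> x ⊙ y ≡[e] ⊥.
Proof.
move=> h; split; last exact: le_le_mod (nm_le0x _).
rewrite /nm_le_mod nm_conjA. apply: nm_le_trans (nm_conj_monol _ h) _.
rewrite nm_conjC. exact: nm_conj_imp_le.
Qed.

Lemma le_mod_neg_conj x y : e ≼ ¬ (x ⊙ y) -> x ≼[e] ¬ y.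
Proof. move=> h. apply/nm_le_neg. rewrite -nm_conjA. exact/nm_le_neg. Qed.

Lemma eq_mod_conj_meet x y : e ≼ x ⊓ y ⇒ x ⊙ y -> x ⊙ y ≡[e] x ⊓ y.
Proof.
move=> h; split; last exact/le_modE.
apply: le_le_mod. apply: nm_le_meet; [exact: nm_conj_le_l|exact: nm_conj_le_r].
Qed.

Lemma eq_mod_imp_top x y : x ≼[e] y -> x ⇒ y ≡[e] ⊤.
Proof.
move=> h; split; first exact: le_le_mod (nm_lex1 _).
rewrite /nm_le_mod nm_conj1. exact/le_modE.
Qed.

Lemma eq_mod_imp_join x y : ~ x ≼[e] y ->
  e ≼ ¬ (x ⊙ ¬ y) \/ e ≼ x ⊓ ¬ y ⇒ x ⊙ ¬ y ->
  x ⇒ y ≡[e] ¬ x ⊔ y.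
Proof.
move=> nh [h|h].
  by exfalso; apply: nh; apply/le_modE; rewrite nm_neg_conj nm_negK in h.
split; last first.
  apply: le_le_mod; apply: nm_join_le; apply/nm_le_resid; last exact: nm_conj_le_l.
  apply: nm_le_trans (nm_le0x y). exact: nm_imp_conj_le.
rewrite -[y in ¬ x ⊔ y]nm_negK -nm_neg_meet /nm_le_mod. apply/nm_le_neg.
rewrite -nm_conjA (nm_conjC (x ⇒ y)) nm_conjA.
have h' : x ⊓ ¬ y ≼[e] x ⊙ ¬ y by exact/le_modE.
apply: nm_le_trans (nm_conj_monol _ h') _.
rewrite nm_conjC nm_conjA. apply: nm_le_trans (nm_conj_monol _ (nm_imp_conj_le x y)) _.
exact: nm_conj_imp_le.
Qed.

End FilterCongruence.


(** Refining [e] to [e ⊙ (h a ⊙ h a)] or [e ⊙ (k a ⊙ k a)] keeps it idempotent, and one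
    of the two still avoids [c] because [(h ⊔ k)² ≼ h² ⊔ k²] and [h a ⊔ k a = ⊤]. *)
Lemma exists_splitting_idempotent (A : NMAlg) (c : A) (I : eqType) (s : seq I)
    (h k : I -> A) :
  (forall i, h i ⊔ k i = nm_top A) -> ~ nm_top A ≼ c ->
  exists e, e ⊙ e = e /\ ~ e ≼ c /\ forall i, i \in s -> e ≼ h i \/ e ≼ k i.
Proof.
move=> hk nc; elim: s => [|a s [e [e_idem [ec hs]]]].
  by exists (nm_top A); split; first exact: nm_conj1.
pose refine z := e ⊙ (z ⊙ z).
have refine_idem z : refine z ⊙ refine z = refine z by rewrite nm_conjACA e_idem nm_sq_idem.
have refine_le z : refine z ≼ z by apply: nm_le_trans (nm_conj_le_r _ _) (nm_sq_le _).
have refine_s z i : i \in s -> refine z ≼ h i \/ refine z ≼ k i.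
  by move=> /hs [hi|hi]; [left|right]; apply: nm_le_trans hi; exact: nm_conj_le_l.
have [hc|hc] := classic (refine (h a) ≼ c); last first.
  exists (refine (h a)); split; first exact: refine_idem.
  split => // i.
  by rewrite inE => /orP [/eqP ->|/refine_s]; [left|].
have [kc|kc] := classic (refine (k a) ≼ c); last first.
  exists (refine (k a)); split; first exact: refine_idem.
  split => // i.
  by rewrite inE => /orP [/eqP ->|/refine_s]; [right|].
exfalso; apply: ec.
have : refine (h a ⊔ k a) ≼ c.
  apply: nm_le_trans (nm_conj_monor _ (nm_sq_join _ _)) _.
  by rewrite nm_conj_joinr; apply: nm_join_le.
by rewrite /refine hk !nm_conj1.
Qed.

Definition asbool (P : Prop) : bool := if excluded_middle_informative P then true else false.

Lemma asboolT (P : Prop) : asbool P = true <-> P.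
Proof. by rewrite /asbool; case: excluded_middle_informative. Qed.

Lemma asboolF (P : Prop) : asbool P = false <-> ~ P.
Proof. by rewrite /asbool; case: excluded_middle_informative. Qed.

Lemma eq_asbool (P Q : Prop) : (P <-> Q) -> asbool P = asbool Q.
Proof.
move=> PQ; case E: (asbool P); apply/esym.
- by apply/asboolT/PQ/asboolT.
- by apply/asboolF => /PQ /asboolT; rewrite E.
Qed.

Definition literal (n : nat) := (('I_n * bool) + bool)%type.

Definition lit_neg n (l : literal n) : literal n :=
  match l with inl (i, b) => inl (i, ~~ b) | inr b => inr (~~ b) end.

Lemma lit_negK n : involutive (@lit_neg n).
Proof. by case=> [[i b]|b] /=; rewrite negbK. Qed.

Definition lit_val (A : NMAlg) n (v : 'I_n -> A) (l : literal n) : A :=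
  match l with
  | inl (i, true) => v i
  | inl (i, false) => ¬ v i
  | inr true => nm_top A
  | inr false => nm_bot A
  end.

Lemma lit_val_neg (A : NMAlg) n (v : 'I_n -> A) l : lit_val v (lit_neg l) = ¬ lit_val v l.
Proof. by case: l => [[i [|]]|[|]] /=; rewrite ?nm_negK ?nm_neg_top ?nm_neg_bot. Qed.

(** When literals are totally ordered by [leb] and the conjunction of two literals is
    either [⊥] or their meet, every formula collapses to the literal computed here. *)
Fixpoint lit_of_form n (leb : rel (literal n)) (f : form n) : literal n :=
  match f with
  | FVar i => inl (i, true)
  | FBot => inr false
  | FTop => inr true
  | FAnd a b =>
      let la := lit_of_form leb a in let lb := lit_of_form leb b in
      if leb la lb then la else lb
  | FOr a b =>
      let la := lit_of_form leb a in let lb := lit_of_form leb b in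
      if leb la lb then lb else la
  | FConj a b =>
      let la := lit_of_form leb a in let lb := lit_of_form leb b in
      if leb la (lit_neg lb) then inr false else if leb la lb then la else lb
  | FImp a b =>
      let la := lit_of_form leb a in let lb := lit_of_form leb b in
      if leb la lb then inr true else if leb (lit_neg la) lb then lb else lit_neg la
  end.

Section CollapseModFilter.
Variables (A : NMAlg) (n : nat) (v : 'I_n -> A) (e : A).
Hypothesis e_idem : e ⊙ e = e.
Hypothesis e_prelin : forall l l' : literal n,
  e ≼ lit_val v l ⇒ lit_val v l' \/ e ≼ lit_val v l' ⇒ lit_val v l.
Hypothesis e_nm_axiom : forall l l' : literal n,
  e ≼ ¬ (lit_val v l ⊙ lit_val v l') \/
  e ≼ lit_val v l ⊓ lit_val v l' ⇒ lit_val v l ⊙ lit_val v l'.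

Definition lit_le_mod : rel (literal n) :=
  fun l l' => asbool (lit_val v l ≼[e] lit_val v l').

Lemma le_mod_lit_total l l' :
  ~ lit_val v l ≼[e] lit_val v l' -> lit_val v l' ≼[e] lit_val v l.
Proof. by case: (e_prelin l l') => /le_modE. Qed.

Lemma eq_mod_lit_meet la lb :
  lit_val v la ⊓ lit_val v lb ≡[e] lit_val v (if lit_le_mod la lb then la else lb).
Proof.
case E: (lit_le_mod la lb).
- by apply: eq_mod_meet_l; apply/asboolT.
- by apply: eq_mod_meet_r; apply: le_mod_lit_total; apply/asboolF.
Qed.

Lemma eq_mod_lit_join la lb :
  lit_val v la ⊔ lit_val v lb ≡[e] lit_val v (if lit_le_mod la lb then lb else la).
Proof.
case E: (lit_le_mod la lb).
- by apply: eq_mod_join_r; apply/asboolT.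
- by apply: eq_mod_join_l; apply: le_mod_lit_total; apply/asboolF.
Qed.

Lemma eval_eq_mod_lit f : eval A v f ≡[e] lit_val v (lit_of_form lit_le_mod f).
Proof.
elim: f => [i| | |a IHa b IHb|a IHa b IHb|a IHa b IHb|a IHa b IHb] /=;
  try exact: eq_mod_refl;
  set la := lit_of_form lit_le_mod a; set lb := lit_of_form lit_le_mod b.
- apply: (eq_mod_trans e_idem (eq_mod_meet IHa IHb)). exact: eq_mod_lit_meet.
- apply: (eq_mod_trans e_idem (eq_mod_join IHa IHb)). exact: eq_mod_lit_join.
- apply: (eq_mod_trans e_idem (eq_mod_conj e_idem IHa IHb)).
  case E1: (lit_le_mod la (lit_neg lb)).
    by apply: eq_mod_conj_bot; move/asboolT: E1; rewrite lit_val_neg.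
  case: (e_nm_axiom la lb) => h.
    by exfalso; move/asboolF: E1; apply; rewrite lit_val_neg; exact: le_mod_neg_conj.
  apply: (eq_mod_trans e_idem (eq_mod_conj_meet h)). exact: eq_mod_lit_meet.
- apply: (eq_mod_trans e_idem (eq_mod_imp e_idem IHa IHb)).
  case E1: (lit_le_mod la lb).
    by apply: eq_mod_imp_top; apply/asboolT.
  have h := e_nm_axiom la (lit_neg lb); rewrite !lit_val_neg in h.
  apply: (eq_mod_trans e_idem (eq_mod_imp_join (proj1 (asboolF _) E1) h)).
  rewrite -lit_val_neg; exact: eq_mod_lit_join.
Qed.

End CollapseModFilter.

Lemma sum_ltn (I : finType) (F G : I -> nat) j :
  (forall i, F i <= G i) -> F j < G j -> \sum_i F i < \sum_i G i.
Proof.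
move=> FG Fj. rewrite (bigD1 j) //= [X in _ < X](bigD1 j) //= -addSn.
by apply: leq_add => //; apply: leq_sum.
Qed.

Definition grid_size (n : nat) : nat := #|{: literal n}| + #|{: literal n}|.

Record lit_order n (leb : rel (literal n)) : Prop := LitOrder {
  lit_order_refl : reflexive leb;
  lit_order_trans : transitive leb;
  lit_order_total : total leb;
  lit_order_neg : forall l l', leb l l' = leb (lit_neg l') (lit_neg l);
  lit_order_bot : forall l, leb (inr false) l;
  lit_order_top : forall l, leb l (inr true);
  lit_order_nontrivial : ~~ leb (inr true) (inr false)
}.

(** A symmetric total preorder on literals is realised on the grid [{0,…,grid_size n}]:
    the score of [l] counts the literals below [l] plus those not above it, so that the
    scores of [l] and [lit_neg l] add up to [grid_size n]; [stretch] then sends the score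
    range [[score ⊥, score ⊤]] onto the whole grid, symmetrically about its midpoint. *)
Section LiteralRank.
Variables (n : nat) (leb : rel (literal n)).
Hypothesis leb_order : lit_order leb.
Let leb_refl := lit_order_refl leb_order.
Let leb_trans := lit_order_trans leb_order.
Let leb_total := lit_order_total leb_order.
Let leb_neg := lit_order_neg leb_order.
Let leb_bot := lit_order_bot leb_order.
Let leb_top := lit_order_top leb_order.
Let leb_nontrivial := lit_order_nontrivial leb_order.

Local Notation N := #|{: literal n}|.
Local Notation D := (grid_size n).

Definition score l : nat :=
  \sum_(l' : literal n) (leb l' l : nat) + \sum_(l' : literal n) (~~ leb l l' : nat).

Lemma sum_leb_split (b : literal n -> bool) :
  \sum_(l' : literal n) (b l' : nat) + \sum_(l' : literal n) (~~ b l' : nat) = N.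
Proof. by rewrite -big_split -sum1_card; apply: eq_bigr => l' _; case: (b l'). Qed.

Lemma sum_below_neg l :
  \sum_(l' : literal n) (leb l' (lit_neg l) : nat) = \sum_(l' : literal n) (leb l l' : nat).
Proof.
rewrite [RHS](reindex_inj (inv_inj (@lit_negK n))).
by apply: eq_bigr => l' _; rewrite leb_neg lit_negK.
Qed.

Lemma sum_not_above_neg l :
  \sum_(l' : literal n) (~~ leb (lit_neg l) l' : nat) =
  \sum_(l' : literal n) (~~ leb l' l : nat).
Proof.
rewrite [RHS](reindex_inj (inv_inj (@lit_negK n))).
by apply: eq_bigr => l' _; rewrite leb_neg lit_negK.
Qed.

Lemma score_neg l : score (lit_neg l) + score l = D.
Proof.
rewrite /score sum_below_neg sum_not_above_neg.
have := sum_leb_split (leb l); have := sum_leb_split (leb^~ l); rewrite /grid_size; lia.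
Qed.

Lemma score_mono l l' : leb l l' -> score l <= score l'.
Proof.
move=> ll'; apply: leq_add; apply: leq_sum => i _.
- by case E: (leb i l) => //=; rewrite (leb_trans E ll').
- by case E: (leb l' i); [rewrite (leb_trans ll' E) | case: (leb l i)].
Qed.

Lemma score_strict l l' : leb l l' -> ~~ leb l' l -> score l < score l'.
Proof.
move=> ll' nl'l; rewrite /score addnC [X in _ < X]addnC -addSn.
apply: leq_add.
- apply: (@sum_ltn _ _ _ l); last by rewrite leb_refl (negbTE nl'l).
  by move=> i; case E: (leb l' i); [rewrite (leb_trans ll' E) | case: (leb l i)].
- by apply: leq_sum => i _; case E: (leb i l) => //=; rewrite (leb_trans E ll').
Qed.

Local Notation s0 := (score (inr false)).
Local Notation s1 := (score (inr true)).

Lemma score_bot_top : s0 + s1 = D. Proof. exact: score_neg (inr true). Qed.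
Lemma score_bot_lt_top : s0 < s1.
Proof. exact: score_strict (leb_top _) leb_nontrivial. Qed.

Lemma score_range l : s0 <= score l <= s1.
Proof. by rewrite (score_mono (leb_bot l)) (score_mono (leb_top l)). Qed.

Definition stretch k : nat :=
  if k + k < s1 - s0 then k else if s1 - s0 < k + k then D - (s1 - s0 - k) else N.

Definition lit_rank l : nat := stretch (score l - s0).

Lemma lit_rank_bot : lit_rank (inr false) = 0.
Proof. rewrite /lit_rank /stretch subnn; have := score_bot_lt_top; (repeat case: ifP); lia. Qed.

Lemma lit_rank_top : lit_rank (inr true) = D.
Proof.
rewrite /lit_rank /stretch; have := score_bot_lt_top; have := score_bot_top.
rewrite /grid_size; (repeat case: ifP); lia.
Qed.

Lemma lit_rank_le l : lit_rank l <= D.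
Proof.
rewrite /lit_rank /stretch; have := score_bot_top; have := score_range l.
rewrite /grid_size; (repeat case: ifP); lia.
Qed.

Lemma lit_rank_neg l : lit_rank (lit_neg l) = D - lit_rank l.
Proof.
rewrite /lit_rank /stretch; have := score_bot_top; have := score_range l; have := score_neg l.
rewrite /grid_size; (repeat case: ifP); lia.
Qed.

Lemma leb_lit_rank l l' : leb l l' = (lit_rank l <= lit_rank l').
Proof.
have := score_bot_top; have := score_range l; have := score_range l'.
rewrite /lit_rank /stretch /grid_size.
case E: (leb l l').
- have := score_mono E; (repeat case: ifP); lia.
- have E' : leb l' l by move: (leb_total l l'); rewrite E.
  have := score_strict E' (negbT E); (repeat case: ifP); lia.
Qed.

Lemma lit_order_grid_rank : exists r : literal n -> nat,
  [/\ r (inr false) = 0, r (inr true) = D, forall l, r l <= D,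
      forall l, r (lit_neg l) = D - r l & forall l l', leb l l' = (r l <= r l')].
Proof.
exists lit_rank; split.
- exact: lit_rank_bot.
- exact: lit_rank_top.
- exact: lit_rank_le.
- exact: lit_rank_neg.
- exact: leb_lit_rank.
Qed.

End LiteralRank.

Section GridEvaluation.
Variables (n D : nat) (leb : rel (literal n)) (r : literal n -> nat).
Hypothesis D_gt0 : 0 < D.
Hypothesis r_bot : r (inr false) = 0.
Hypothesis r_top : r (inr true) = D.
Hypothesis r_le : forall l, r l <= D.
Hypothesis r_neg : forall l, r (lit_neg l) = D - r l.
Hypothesis leb_r : forall l l', leb l l' = (r l <= r l').
Local Open Scope R_scope.

Let val l := INR (r l) / INR D.

Let D_pos : 0 < INR D. Proof. by apply: lt_0_INR; apply/ltP. Qed.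

Let val_bot : val (inr false) = 0. Proof. by rewrite /val r_bot /= /Rdiv Rmult_0_l. Qed.

Let val_top : val (inr true) = 1. Proof. rewrite /val r_top; field; lra. Qed.

Let val_neg l : val (lit_neg l) = 1 - val l.
Proof. rewrite /val r_neg minus_INR; last exact/leP. field; lra. Qed.

Let leb_val l l' : leb l l' = true <-> val l <= val l'.
Proof.
rewrite leb_r /val; split=> [/leP/le_INR h | h].
- by apply: Rmult_le_compat_r h; apply/Rlt_le/Rinv_0_lt_compat.
- apply/leP/INR_le; apply: (Rmult_le_reg_r (/ INR D)); first exact: Rinv_0_lt_compat.
  exact: h.
Qed.

Let leb_val_lt l l' : leb l l' = false -> val l' < val l.
Proof. by move=> h; apply: Rnot_le_lt => /leb_val; rewrite h. Qed.

Lemma evalR_lit_of_form f :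
  evalR (fun i => val (inl (i, true))) f = val (lit_of_form leb f).
Proof.
elim: f => [i| | |a IHa b IHb|a IHa b IHb|a IHa b IHb|a IHa b IHb] //=;
  rewrite ?val_bot ?val_top // IHa IHb.
- case E: (leb _ _); first by rewrite Rmin_left //; apply/leb_val.
  by rewrite Rmin_right //; apply/Rlt_le/leb_val_lt.
- case E: (leb _ _); first by rewrite Rmax_right //; apply/leb_val.
  by rewrite Rmax_left //; apply/Rlt_le/leb_val_lt.
- rewrite /std_conj; case E1: (leb _ (lit_neg _)).
    move/leb_val: E1; rewrite val_neg => E1.
    by case: Rlt_dec => h; [lra | rewrite val_bot].
  move/leb_val_lt: E1; rewrite val_neg => E1.
  case: Rlt_dec => h; last lra.
  case E: (leb _ _); first by rewrite Rmin_left //; apply/leb_val.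
  by rewrite Rmin_right //; apply/Rlt_le/leb_val_lt.
- rewrite /std_imp; case E1: (leb _ _).
    move/leb_val: E1 => E1; case: Rle_dec => h; [by rewrite val_top | lra].
  move/leb_val_lt: E1 => E1; case: Rle_dec => h; first lra.
  case E: (leb (lit_neg _) _).
  + by move/leb_val: E; rewrite val_neg => E; rewrite Rmax_right.
  + by move/leb_val_lt: E; rewrite val_neg => E; rewrite Rmax_left ?val_neg //; lra.
Qed.

End GridEvaluation.

Section LiteralFilter.
Variables (A : NMAlg) (n : nat) (v : 'I_n -> A).
Local Notation "⊥" := (nm_bot A).
Local Notation "⊤" := (nm_top A).
Local Notation lv := (lit_val v).

Lemma exists_literal_filter (c : A) : ~ ⊤ ≼ c ->
  exists e, [/\ e ⊙ e = e, ~ e ≼ c,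
    forall l l', e ≼ lv l ⇒ lv l' \/ e ≼ lv l' ⇒ lv l &
    forall l l', e ≼ ¬ (lv l ⊙ lv l') \/ e ≼ lv l ⊓ lv l' ⇒ lv l ⊙ lv l'].
Proof.
move=> nc.
pose h (i : literal n * literal n * bool) :=
  let: (l, l', b) := i in if b then lv l ⇒ lv l' else ¬ (lv l ⊙ lv l').
pose k (i : literal n * literal n * bool) :=
  let: (l, l', b) := i in if b then lv l' ⇒ lv l else lv l ⊓ lv l' ⇒ lv l ⊙ lv l'.
have hk i : h i ⊔ k i = ⊤ by case: i => [[l l'] []]; [exact: nm_prelin | exact: nm_axiom].
have [e [e_idem [ec he]]] :=
  exists_splitting_idempotent (enum {: literal n * literal n * bool}) hk nc.
exists e; split=> // l l'.
- exact: (he (l, l', true) (mem_enum _ _)).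
- exact: (he (l, l', false) (mem_enum _ _)).
Qed.

Lemma lit_le_mod_order (e : A) : e ⊙ e = e -> ~ e ≼ ⊥ ->
  (forall l l', e ≼ lv l ⇒ lv l' \/ e ≼ lv l' ⇒ lv l) ->
  lit_order (lit_le_mod v e).
Proof.
move=> e_idem e0 e_prelin; split.
- by move=> l; apply/asboolT; exact: le_mod_refl.
- by move=> l2 l1 l3 /asboolT h1 /asboolT h2; apply/asboolT; exact: le_mod_trans h2.
- by move=> l l'; case: (e_prelin l l') => /le_modE h; apply/orP; [left|right]; apply/asboolT.
- by move=> l l'; apply: eq_asbool; rewrite !lit_val_neg !le_modE -nm_imp_contra.
- by move=> l; apply/asboolT; rewrite /nm_le_mod /= nm_conj0; exact: nm_le0x.
- by move=> l; apply/asboolT; exact: nm_lex1.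
- by apply/negP => /asboolT; rewrite /nm_le_mod /= nm_conj1.
Qed.

End LiteralFilter.

Definition grid_point n (js : {ffun 'I_n -> 'I_(grid_size n).+1}) : 'I_n -> R :=
  fun i => (INR (js i) / INR (grid_size n))%R.

Lemma grid_size_gt0 n : 0 < grid_size n.
Proof. by rewrite /grid_size addn_gt0; apply/orP; left; apply/card_gt0P; exists (inr false).
Qed.

Lemma evalR_ext n (p q : 'I_n -> R) f : p =1 q -> evalR p f = evalR q f.
Proof.
move=> pq.
by elim: f => [i| | |a IHa b IHb|a IHa b IHb|a IHa b IHb|a IHa b IHb] /=; rewrite ?IHa ?IHb.
Qed.

(** If [f ⇒ g] fails in [A], a filter avoiding it linearly orders the literals and makes
    each formula equal to a literal; ranking the literals on the grid then yields a grid
    point where [f] and [g] evaluate differently. *)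
Lemma grid_complete_le n (f g : form n) :
  (forall js, evalR (grid_point js) f = evalR (grid_point js) g) ->
  forall (A : NMAlg) (v : 'I_n -> A), eval A v f ≼ eval A v g.
Proof.
move=> fg A v; apply: NNPP => nfg.
have nc : ~ nm_top A ≼ eval A v f ⇒ eval A v g.
  by move=> /nm_le1x /nm_le_imp_top.
have [e [e_idem ec e_prelin e_axiom]] := exists_literal_filter v nc.
have e0 : ~ e ≼ nm_bot A by move=> e0; apply: ec; exact: nm_le_trans e0 (nm_le0x _).
have [r [r_bot r_top r_le r_neg leb_r]] :=
  lit_order_grid_rank (lit_le_mod_order e_idem e0 e_prelin).
pose js : {ffun 'I_n -> 'I_(grid_size n).+1} := [ffun i => inord (r (inl (i, true)))].
have js_r i : grid_point js i = (INR (r (inl (i, true))) / INR (grid_size n))%R.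
  by rewrite /grid_point ffunE inordK // ltnS.
have := fg js; rewrite !(evalR_ext _ js_r).
rewrite !(evalR_lit_of_form (grid_size_gt0 n) r_bot r_top r_le r_neg leb_r) => lit_fg.
have : lit_le_mod v e (lit_of_form (lit_le_mod v e) f) (lit_of_form (lit_le_mod v e) g).
  rewrite leb_r; apply/leP/INR_le/(Rmult_le_reg_r (/ INR (grid_size n))).
    by apply/Rinv_0_lt_compat/lt_0_INR/ltP/grid_size_gt0.
  by move: lit_fg; rewrite /Rdiv => ->; exact: Rle_refl.
move/asboolT => lit_le; apply: ec; apply/le_modE.
have [f_lit _] := eval_eq_mod_lit e_idem e_prelin e_axiom f.
have [_ lit_g] := eval_eq_mod_lit e_idem e_prelin e_axiom g.
by apply: (le_mod_trans e_idem f_lit); apply: (le_mod_trans e_idem lit_le).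
Qed.

Lemma grid_complete n (f g : form n) :
  (forall js, evalR (grid_point js) f = evalR (grid_point js) g) -> fequiv f g.
Proof. by move=> fg A v; apply: nm_le_anti; apply: grid_complete_le. Qed.

Local Open Scope R_scope.

Ltac no_dec t := lazymatch t with
  | context [Rle_dec _ _] => fail | context [Rlt_dec _ _] => fail | _ => idtac end.

Ltac real_cases := unfold std_conj, std_imp, Rmin, Rmax in *;
  repeat match goal with
  | |- context [Rle_dec ?a ?b] =>
      no_dec a; no_dec b; destruct (Rle_dec a b); cbv beta iota delta [is_left]
  | |- context [Rlt_dec ?a ?b] =>
      no_dec a; no_dec b; destruct (Rlt_dec a b); cbv beta iota delta [is_left]
  end; lra.

Definition unit_interval := {x : R | 0 <= x <= 1}.

Lemma unit_interval_ext (a b : unit_interval) : proj1_sig a = proj1_sig b -> a = b.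
Proof.
case: a b => [a ha] [b hb] /= ab; subst b.
by rewrite (proof_irrelevance _ ha hb).
Qed.

Section StandardAlgebra.

Lemma unit_min (x y : R) : 0 <= x <= 1 -> 0 <= y <= 1 -> 0 <= Rmin x y <= 1.
Proof. intros; real_cases. Qed.
Lemma unit_max (x y : R) : 0 <= x <= 1 -> 0 <= y <= 1 -> 0 <= Rmax x y <= 1.
Proof. intros; real_cases. Qed.
Lemma unit_conj (x y : R) : 0 <= x <= 1 -> 0 <= y <= 1 -> 0 <= std_conj x y <= 1.
Proof. intros; real_cases. Qed.
Lemma unit_imp (x y : R) : 0 <= x <= 1 -> 0 <= y <= 1 -> 0 <= std_imp x y <= 1.
Proof. intros; real_cases. Qed.
Lemma unit_0 : 0 <= 0 <= 1. Proof. lra. Qed.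
Lemma unit_1 : 0 <= 1 <= 1. Proof. lra. Qed.

Definition ui_lift2 (op : R -> R -> R) (hop : forall x y, 0 <= x <= 1 -> 0 <= y <= 1 ->
    0 <= op x y <= 1) (a b : unit_interval) : unit_interval :=
  exist _ (op (proj1_sig a) (proj1_sig b)) (hop _ _ (proj2_sig a) (proj2_sig b)).

Local Notation ui_min := (ui_lift2 unit_min).
Local Notation ui_max := (ui_lift2 unit_max).
Local Notation ui_conj := (ui_lift2 unit_conj).
Local Notation ui_imp := (ui_lift2 unit_imp).
Local Notation ui0 := (exist _ 0 unit_0 : unit_interval).
Local Notation ui1 := (exist _ 1 unit_1 : unit_interval).

Implicit Types x y z : unit_interval.

Ltac ui_cases := repeat match goal with a : unit_interval |- _ => destruct a end;
  apply: unit_interval_ext; rewrite /ui_lift2 /=; real_cases.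

Lemma ui_meetA x y z : ui_min x (ui_min y z) = ui_min (ui_min x y) z. Proof. ui_cases. Qed.
Lemma ui_joinA x y z : ui_max x (ui_max y z) = ui_max (ui_max x y) z. Proof. ui_cases. Qed.
Lemma ui_meetC x y : ui_min x y = ui_min y x. Proof. ui_cases. Qed.
Lemma ui_joinC x y : ui_max x y = ui_max y x. Proof. ui_cases. Qed.
Lemma ui_meetK x y : ui_min x (ui_max x y) = x. Proof. ui_cases. Qed.
Lemma ui_joinK x y : ui_max x (ui_min x y) = x. Proof. ui_cases. Qed.
Lemma ui_bot_le x : ui_min ui0 x = ui0. Proof. ui_cases. Qed.
Lemma ui_le_top x : ui_min x ui1 = x. Proof. ui_cases. Qed.
Lemma ui_conjA x y z : ui_conj x (ui_conj y z) = ui_conj (ui_conj x y) z. Proof. ui_cases. Qed.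
Lemma ui_conjC x y : ui_conj x y = ui_conj y x. Proof. ui_cases. Qed.
Lemma ui_conj1 x : ui_conj x ui1 = x. Proof. ui_cases. Qed.
Lemma ui_prelin x y : ui_max (ui_imp x y) (ui_imp y x) = ui1. Proof. ui_cases. Qed.
Lemma ui_axiom x y :
  ui_max (ui_imp (ui_conj x y) ui0) (ui_imp (ui_min x y) (ui_conj x y)) = ui1.
Proof. ui_cases. Qed.
Lemma ui_invol x : ui_imp (ui_imp x ui0) ui0 = x. Proof. ui_cases. Qed.

Lemma ui_resid x y z : ui_min (ui_conj x y) z = ui_conj x y <-> ui_min x (ui_imp y z) = x.
Proof.
case: x y z => [x hx] [y hy] [z hz]; split=> /(f_equal (@proj1_sig _ _)) /= h;
  apply: unit_interval_ext; rewrite /ui_lift2 /=; move: h; real_cases.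
Qed.

Definition std_nm : NMAlg := Build_NMAlg ui_meetA ui_joinA ui_meetC ui_joinC ui_meetK
  ui_joinK ui_bot_le ui_le_top ui_conjA ui_conjC ui_conj1 ui_resid ui_prelin ui_axiom
  ui_invol.

End StandardAlgebra.

Definition unit_point n (p : 'I_n -> R) := forall i, 0 <= p i <= 1.

Lemma eval_std_nm n (p : 'I_n -> R) (hp : unit_point p) f :
  proj1_sig (eval std_nm (fun i => exist _ (p i) (hp i)) f) = evalR p f.
Proof.
by elim: f => [i| | |a IHa b IHb|a IHa b IHb|a IHa b IHb|a IHa b IHb] //=; rewrite IHa IHb.
Qed.

Lemma std_sound n (f g : form n) p : fequiv f g -> unit_point p -> evalR p f = evalR p g.
Proof. by move=> fg hp; rewrite -(eval_std_nm hp f) -(eval_std_nm hp g) fg. Qed.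

Lemma evalR_unit n (p : 'I_n -> R) f : unit_point p -> 0 <= evalR p f <= 1.
Proof. by move=> hp; rewrite -(eval_std_nm hp f); exact: (proj2_sig (eval std_nm _ f)). Qed.

Definition round3 (x : R) : R :=
  if Rlt_dec x (1/2) then 0 else if Rlt_dec (1/2) x then 1 else 1/2.

Section Round3.
Variables x y : R.
Hypotheses (hx : 0 <= x <= 1) (hy : 0 <= y <= 1).

Lemma round3_min : round3 (Rmin x y) = Rmin (round3 x) (round3 y).
Proof. rewrite /round3; real_cases. Qed.
Lemma round3_max : round3 (Rmax x y) = Rmax (round3 x) (round3 y).
Proof. rewrite /round3; real_cases. Qed.
Lemma round3_conj : round3 (std_conj x y) = std_conj (round3 x) (round3 y).
Proof. rewrite /round3; real_cases. Qed.
Lemma round3_imp : round3 (std_imp x y) = std_imp (round3 x) (round3 y).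
Proof. rewrite /round3; real_cases. Qed.

End Round3.

Lemma evalR_round3 n (p : 'I_n -> R) f : unit_point p ->
  evalR (fun i => round3 (p i)) f = round3 (evalR p f).
Proof.
move=> hp; have unit_val a := evalR_unit a hp.
elim: f => [i| | |a IHa b IHb|a IHa b IHb|a IHa b IHb|a IHa b IHb] /=;
  rewrite ?IHa ?IHb ?round3_min ?round3_max ?round3_conj ?round3_imp //;
  rewrite /round3; real_cases.
Qed.

Definition round3_index (x : R) : 'I_3 :=
  if Rlt_dec x (1/2) then ord0 else if Rlt_dec (1/2) x then inord 2 else inord 1.

Lemma three_val_round3_index x : three_val (round3_index x) = round3 x.
Proof.
rewrite /round3_index /round3 /three_val.
case: Rlt_dec => _ /=; first by rewrite /Rdiv Rmult_0_l.
by case: Rlt_dec => _ /=; rewrite inordK //=; field.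
Qed.

Lemma three_val_unit (k : 'I_3) : 0 <= three_val k <= 1.
Proof. by case: k => [[|[|[|k]]] hk] //=; rewrite /three_val /=; lra. Qed.

Lemma is_oneP x : is_one x = true <-> x = 1.
Proof. by rewrite /is_one; case: Req_EM_T. Qed.

Section CountingModels.
Variable n : nat.
Implicit Types (f g : form n) (mu : {ffun 'I_n -> 'I_3}).

Definition point3 mu : 'I_n -> R := fun i => three_val (mu i).

Definition models3 f := [set mu | is_one (evalR (point3 mu) f)].

Lemma point3_unit mu : unit_point (point3 mu).
Proof. by move=> i; exact: three_val_unit. Qed.

Lemma in_models3 f mu : (mu \in models3 f) <-> evalR (point3 mu) f = 1.
Proof. by rewrite inE; exact: is_oneP. Qed.

Lemma models3_equiv f g : fequiv f g -> models3 f = models3 g.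
Proof. by move=> fg; apply/setP => mu; rewrite !inE (std_sound fg (point3_unit mu)). Qed.

Lemma models3_bot : models3 FBot = set0.
Proof. by apply/setP => mu; rewrite !inE /=; apply/negP => /is_oneP; lra. Qed.

Lemma models3_or f g : models3 (FOr f g) = models3 f :|: models3 g.
Proof.
apply/setP => mu; rewrite in_setU; apply/idP/orP; rewrite !in_models3 /=.
- have := evalR_unit f (point3_unit mu); have := evalR_unit g (point3_unit mu).
  by rewrite /Rmax; case: Rle_dec => _ _ _ ->; [right | left].
- have := evalR_unit f (point3_unit mu); have := evalR_unit g (point3_unit mu).
  by move=> ? ? [] ->; real_cases.
Qed.

Lemma models3_and f g : models3 (FAnd f g) = models3 f :&: models3 g.
Proof.
apply/setP => mu; rewrite in_setI; apply/idP/andP; rewrite !in_models3 /=.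
- have := evalR_unit f (point3_unit mu); have := evalR_unit g (point3_unit mu).
  by move=> ? ? h; split; move: h; real_cases.
- by case=> -> ->; real_cases.
Qed.

Lemma count_models3_or_and f g :
  (count_models3 (FOr f g) + count_models3 (FAnd f g) =
   count_models3 f + count_models3 g)%nat.
Proof.
by rewrite /count_models3 -!/(models3 _) models3_or models3_and cardsUI.
Qed.

End CountingModels.

Section JoinIrreducibleModels.
Variable n : nat.
Implicit Types (f g h k : form n) (mu : {ffun 'I_n -> 'I_3}).

Lemma fequiv_models3 f g mu : fequiv f g -> mu \in models3 f -> evalR (point3 mu) g = 1.
Proof. by move=> fg; rewrite (models3_equiv fg) in_models3. Qed.

Lemma join_irreducible_idempotent g mu :
  join_irreducible g -> mu \in models3 g -> Defs.idempotent g.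
Proof.
move=> [_ g_ji] g_mu.
have g_split : fequiv g (FOr (FConj g g) (FAnd g (FImp g FBot))).
  by move=> A v; exact: nm_split_sq.
case: (g_ji _ _ g_split) => [g_sq A v | g_meet]; first by rewrite -g_sq.
have g1 : evalR (point3 mu) g = 1 by apply/in_models3.
have := fequiv_models3 g_meet g_mu; rewrite /= g1; real_cases.
Qed.

(** For every decomposition [h ⊔ k = ⊤], a join-irreducible [g] equals [g ⊙ h] or [g ⊙ k],
    since [g = (g ⊙ h) ⊔ (g ⊙ k)]. *)
Lemma join_irreducible_split g h k :
  join_irreducible g -> (forall A v, eval A v h ⊔ eval A v k = nm_top A) ->
  {subset models3 g <= models3 h} \/ {subset models3 g <= models3 k}.
Proof.
move=> [_ g_ji] hk.
have split_g : fequiv g (FOr (FConj g h) (FConj g k)).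
  by move=> A v /=; exact: nm_conj_split_top.
have sat s mu : fequiv g (FConj g s) -> mu \in models3 g -> mu \in models3 s.
  move=> gs g_mu; have /= := fequiv_models3 gs g_mu.
  move: g_mu; rewrite !in_models3 => ->.
  have := evalR_unit s (point3_unit mu); rewrite /std_conj; real_cases.
by case: (g_ji _ _ split_g) => gs; [left | right] => mu; exact: sat.
Qed.

Lemma separating_pair (i : 'I_n) (a b : 'I_3) : (a < b)%nat ->
  exists h k, [/\ forall A v, eval A v h ⊔ eval A v k = nm_top A,
    forall mu, mu i = a -> mu \notin models3 h &
    forall mu, mu i = b -> mu \notin models3 k].
Proof.
pose t := @FVar n i; pose nt := FImp t FBot.
have nm_ax s : forall A v, eval A v (FImp (FConj s s) FBot) ⊔
    eval A v (FImp (FAnd s s) (FConj s s)) = nm_top A by move=> A v; exact: nm_axiom.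
have notin s mu : evalR (point3 mu) s <> 1 -> mu \notin models3 s.
  by move=> s1; apply/negP => /in_models3.
case: a b => [[|[|[|a]]] ha] // [[|[|[|b]]] hb] //= _.
- exists (FImp (FConj nt nt) FBot), (FImp (FAnd nt nt) (FConj nt nt)).
  split=> [|mu mui|mu mui]; [exact: nm_ax | |]; apply: notin;
    rewrite /= /point3 mui /three_val /=; real_cases.
- exists (FImp nt t), (FImp t nt).
  split=> [A v|mu mui|mu mui]; [by rewrite nm_joinC; exact: nm_prelin | |];
    apply: notin; rewrite /= /point3 mui /three_val /=; real_cases.
- exists (FImp (FAnd t t) (FConj t t)), (FImp (FConj t t) FBot).
  split=> [A v|mu mui|mu mui]; [by rewrite nm_joinC; exact: nm_ax | |];
    apply: notin; rewrite /= /point3 mui /three_val /=; real_cases.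
Qed.

Lemma join_irreducible_models3_le1 g : join_irreducible g -> (#|models3 g| <= 1)%nat.
Proof.
move=> g_ji; rewrite leqNgt; apply/negP => /card_gt1P [mu1 [mu2 [g_mu1 g_mu2 mu12]]].
have [i mu12i] : exists i, mu1 i != mu2 i.
  apply/existsP; rewrite -negb_forall; apply: contra mu12 => /forallP mu12.
  by apply/eqP/ffunP => i; apply/eqP.
wlog lt12 : mu1 mu2 g_mu1 g_mu2 {mu12} mu12i / (mu1 i < mu2 i)%nat.
{ move=> wlog; case: (ltngtP (mu1 i) (mu2 i)) => [lt12|lt21|/val_inj eq12].
  - exact: (wlog mu1 mu2).
  - by apply: (wlog mu2 mu1); rewrite // eq_sym.
  - by rewrite eq12 eqxx in mu12i. }
have [h [k [hk h_mu1 k_mu2]]] := separating_pair i lt12.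
case: (join_irreducible_split g_ji hk) => sub.
- by move: (h_mu1 mu1 erefl); rewrite (sub _ g_mu1).
- by move: (k_mu2 mu2 erefl); rewrite (sub _ g_mu2).
Qed.

End JoinIrreducibleModels.

Section GridMeasure.
Variable n : nat.
Implicit Types (f g : form n) (js : {ffun 'I_n -> 'I_(grid_size n).+1}).
Local Notation D := (grid_size n).

Let D_pos : 0 < INR D. Proof. by apply/lt_0_INR/ltP/grid_size_gt0. Qed.

Lemma grid_point_unit js : unit_point (grid_point js).
Proof.
move=> i; have jsi : (js i <= D)%nat by rewrite -ltnS.
have := pos_INR (js i); have /leP/le_INR := jsi; rewrite /grid_point => h0 h1.
split; first by apply: Rmult_le_pos => //; apply/Rlt_le/Rinv_0_lt_compat.
apply: (Rmult_le_reg_r (INR D)) => //; rewrite /Rdiv Rmult_assoc Rinv_l; lra.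
Qed.

Lemma not_fequiv_grid f g : ~ fequiv f g ->
  exists js, evalR (grid_point js) f <> evalR (grid_point js) g.
Proof.
move=> fg; apply: NNPP => no_js; apply: fg; apply: grid_complete => js.
by apply: NNPP => fg_js; apply: no_js; exists js.
Qed.

Lemma evalR_grid js f : exists j : 'I_D.+1, evalR (grid_point js) f = INR j / INR D.
Proof.
have top : exists j : 'I_D.+1, 1 = INR j / INR D by exists ord_max; rewrite /=; field; lra.
have bot : exists j : 'I_D.+1, 0 = INR j / INR D by exists ord0; rewrite /= /Rdiv Rmult_0_l.
have neg (j : 'I_D.+1) : exists j' : 'I_D.+1, 1 - INR j / INR D = INR j' / INR D.
  have jD : (j <= D)%nat by rewrite -ltnS.
  exists (inord (D - j)); rewrite inordK ?ltnS ?leq_subr // minus_INR; last exact/leP.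
  field; lra.
elim: f => [i| | |a IHa b IHb|a IHa b IHb|a IHa b IHb|a IHa b IHb] //=;
  try (case: IHa => ja ->; case: IHb => jb ->).
- by exists (js i).
- rewrite /Rmin; case: Rle_dec => ?; [by exists ja | by exists jb].
- rewrite /Rmax; case: Rle_dec => ?; [by exists jb | by exists ja].
- rewrite /std_conj /Rmin; case: Rlt_dec => ? //.
  by case: Rle_dec => ?; [exists ja | exists jb].
- rewrite /std_imp /Rmax; case: Rle_dec => ? //.
  by case: Rle_dec => ?; [exists jb | exact: neg].
Qed.

Definition grid_rank (x : R) : nat :=
  \sum_(j < D.+1) (if Rle_dec (INR j / INR D) x then 1 else 0)%nat.

Definition grid_measure f : nat := \sum_js grid_rank (evalR (grid_point js) f).

Lemma grid_rank_mono x y : x <= y -> (grid_rank x <= grid_rank y)%nat.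
Proof.
move=> xy; apply: leq_sum => j _.
by case: Rle_dec => ?; case: Rle_dec => ? //=; exfalso; lra.
Qed.

Lemma grid_measure_lt f g :
  (forall js, evalR (grid_point js) f <= evalR (grid_point js) g) ->
  (exists js, evalR (grid_point js) f <> evalR (grid_point js) g) ->
  (grid_measure f < grid_measure g)%nat.
Proof.
move=> fg [js fg_js]; rewrite /grid_measure.
apply: (@sum_ltn _ _ _ js) => [js'|]; first exact: grid_rank_mono.
have [j gj] := evalR_grid js g.
have := fg js; rewrite gj => fg_j.
apply: (@sum_ltn _ _ _ j) => [j'|];
  by case: Rle_dec => ?; case: Rle_dec => ? //=; exfalso; lra.
Qed.

Lemma grid_measure_join_lt f a b : fequiv f (FOr a b) -> ~ fequiv a f ->
  (grid_measure a < grid_measure f)%nat /\ (grid_measure (FAnd a b) < grid_measure f)%nat.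
Proof.
move=> fab af; have [js a_js] := not_fequiv_grid af.
have f_max js' : evalR (grid_point js') f =
    Rmax (evalR (grid_point js') a) (evalR (grid_point js') b).
  exact: std_sound fab (grid_point_unit js').
have a_le js' : evalR (grid_point js') a <= evalR (grid_point js') f.
  by rewrite f_max; exact: Rmax_l.
split; apply: grid_measure_lt.
- exact: a_le.
- by exists js.
- move=> js' /=; have := Rmin_l (evalR (grid_point js') a) (evalR (grid_point js') b).
  by have := a_le js'; lra.
- exists js => /=; have := Rmin_l (evalR (grid_point js) a) (evalR (grid_point js) b).
  by have := a_le js; move: a_js; lra.
Qed.

(** An idempotent value in [[0,1]] is [0] or above [1/2], so it rounds to [0] or [1]. *)
Lemma idempotent_has_model3 g : Defs.idempotent g -> ~ fequiv g FBot ->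
  exists mu, mu \in models3 g.
Proof.
move=> g_idem g0; have [js /= gjs] := not_fequiv_grid g0.
have g_unit := evalR_unit g (grid_point_unit js).
have := std_sound g_idem (grid_point_unit js); rewrite /= => g_sq.
exists [ffun i => round3_index (grid_point js i)]; apply/in_models3.
rewrite (evalR_ext _ (_ : _ =1 fun i => round3 (grid_point js i))); last first.
  by move=> i; rewrite /point3 ffunE three_val_round3_index.
rewrite evalR_round3; last exact: grid_point_unit.
by move: g_sq gjs g_unit; rewrite /round3; real_cases.
Qed.

End GridMeasure.

Lemma count_models3_join_irreducible n (g : form n) : join_irreducible g ->
  (Defs.idempotent g -> count_models3 g = 1%nat) /\
  (~ Defs.idempotent g -> count_models3 g = 0%nat).
Proof.
move=> g_ji; have le1 := join_irreducible_models3_le1 g_ji; split=> [g_idem | g_nidem].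
- have [mu g_mu] := idempotent_has_model3 g_idem g_ji.1.
  apply/eqP; rewrite eqn_leq le1 /=; apply/card_gt0P; by exists mu.
- apply/eqP; rewrite cards_eq0; apply/eqP/setP => mu; rewrite in_set0.
  by apply/negP => /(join_irreducible_idempotent g_ji).
Qed.

Lemma count_models3_chi_plus n : is_chi_plus (fun f : form n => INR (count_models3 f)).
Proof.
split; [split | split].
- by move=> f g fg; rewrite /count_models3 -!/(models3 _) (models3_equiv fg).
- move=> f g; rewrite -!plus_INR; congr INR; have := count_models3_or_and f g; lia.
- by rewrite /count_models3 -/(models3 _) models3_bot cards0.
- move=> g g_ji; have [c1 c0] := count_models3_join_irreducible g_ji.
  by split=> [/c1 | /c0] ->.
Qed.

Lemma fequiv_sym n (f g : form n) : fequiv f g -> fequiv g f.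
Proof. by move=> fg A v; rewrite fg. Qed.

Lemma decompose_join_reducible n (f : form n) : ~ fequiv f FBot -> ~ join_irreducible f ->
  exists a b, [/\ fequiv f (FOr a b), ~ fequiv a f & ~ fequiv b f].
Proof.
move=> f0 f_nji; apply: NNPP => no_ab; apply: f_nji; split=> // a b fab.
apply: NNPP => /Decidable.not_or [fa fb]; apply: no_ab.
by exists a, b; split=> // /fequiv_sym.
Qed.

(** Both valuations are fixed on join-irreducibles and on [⊥]; any other [f] is a join
    [FOr a b] of strictly smaller elements, and the grid measure makes the recursion
    well founded. *)
Lemma chi_plus_unique n (nu nu' : form n -> R) :
  is_chi_plus nu -> is_chi_plus nu' -> forall f, nu f = nu' f.
Proof.
move=> [[nu_eq nu_val] [nu0 nu_ji]] [[nu'_eq nu'_val] [nu'0 nu'_ji]] f.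
have [m] := ubnP (grid_measure f); elim: m f => // m IHm f /ltnSE f_m.
have [f0 | f0] := classic (fequiv f FBot).
  by rewrite (nu_eq _ _ f0) (nu'_eq _ _ f0) nu0 nu'0.
have [f_ji | f_nji] := classic (join_irreducible f).
  have [nu1 nu0'] := nu_ji f f_ji; have [nu'1 nu'0'] := nu'_ji f f_ji.
  by have [f_idem | f_idem] := classic (Defs.idempotent f);
    [rewrite nu1 ?nu'1 | rewrite nu0' ?nu'0'].
have [a [b [fab af bf]]] := decompose_join_reducible f0 f_nji.
have fba : fequiv f (FOr b a) by move=> A v; rewrite fab /= nm_joinC.
have [a_lt ab_lt] := grid_measure_join_lt fab af.
have [b_lt _] := grid_measure_join_lt fba bf.
have IH c : (grid_measure c < grid_measure f)%nat -> nu c = nu' c.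
  by move=> c_lt; apply: IHm; apply: leq_trans c_lt f_m.
have := nu_val a b; have := nu'_val a b.
rewrite -(nu_eq _ _ fab) -(nu'_eq _ _ fab) (IH a a_lt) (IH b b_lt) (IH _ ab_lt); lra.
Qed.

Local Close Scope R_scope.

Theorem theorem5 (n : nat) (hn : (1 <= n)%N) :
  (exists nu : form n -> R, is_chi_plus nu) /\
  (forall nu : form n -> R, is_chi_plus nu ->
     forall phi : form n, nu phi = INR (count_models3 phi)).
Proof.
split; first by exists (fun f => INR (count_models3 f)); exact: count_models3_chi_plus.
by move=> nu nu_chi; apply: chi_plus_unique nu_chi (count_models3_chi_plus n).
Qed.
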